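(* Let $n,N\ge1$ and positive integers $r_1,\dots,r_N,r$ with $r_i\le r\le\lfloor(n-1)/2\rfloor$. Consider either (a) $d=n$, $m=r_i$, $p=r_i+1$ for some $i$, $\mathcal{A}(y)=\mathcal{H}_{r_i+1}(y)$; or (b) $d=Nn$, $m=r$, $p=r+1$, $\mathcal{A}(y)=[\mathcal{H}_{r+1}(y_1)\cdots\mathcal{H}_{r+1}(y_N)]$ for $y=(y_1^\top,\dots,y_N^\top)^\top$. Fix $\hat y\in\mathbb{R}^d$ and let $\Psi(R)=\inf_{y}\{\frac12\|y-\hat y\|^2: R\mathcal{A}(y)=0\}$ for $R\in\mathbb{R}^{1\times p}$. Let $y_b\in\mathbb{R}^d$ satisfy $\mathrm{rank}(\mathcal{A}(y_b))\le m$ and let $R^0\in\mathbb{R}^{1\times p}\setminus\{0\}$ satisfy $R^0\mathcal{A}(y_b)=0$. Then for any $\widetilde R\in\mathbb{R}^{1\times p}\setminus\{0\}$ with $\Psi(\widetilde R)\le\Psi(R^0)$, we have $\|y_{\widetilde R}-\hat y\|\le\|y_b-\hat y\|$, where $y_{\widetilde R}$ attains the infimum defining $\Psi(\widetilde R)$.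
   Context: For $x\in\mathbb{R}^n$ and $1\le l\le n$, $\mathcal{H}_l(x)\in\mathbb{R}^{l\times(n-l+1)}$ is the Hankel matrix with $(i,j)$ entry $x(i+j-1)$. *)

From HB Require Import structures.
From mathcomp Require Import all_boot all_order all_algebra.
From mathcomp Require Import boolp classical_sets reals.
Set Implicit Arguments. Unset Strict Implicit. Unset Printing Implicit Defensive.
Import Order.TTheory GRing.Theory Num.Theory.
Local Open Scope ring_scope.
Local Open Scope classical_set_scope.

Section Defs.
Variable R : realType.

(* 0-indexed entry of a vector x in R^n (as a row vector); 0 out of range
   (never used out of range below). Paper's x(k+1) = ent x k. *)
Definition ent (n : nat) (x : 'rV[R]_n) (k : nat) : R :=
  if (insub k : option 'I_n) is Some i then x 0 i else 0.

Definition hankel (n l : nat) (x : 'rV[R]_n) : 'M[R]_(l, n - l + 1) :=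
  \matrix_(i < l, j < n - l + 1) ent x (i + j).

(* [H_{r+1}(y_1) ... H_{r+1}(y_N)] for y = (y_1^T,...,y_N^T)^T in R^{N n};
   block k of y is y(k n + t), column j belongs to block j %/ (n-r). *)
Definition blockHankel (N n r : nat) (y : 'rV[R]_(N * n))
  : 'M[R]_(r.+1, N * (n - r.+1 + 1)) :=
  \matrix_(i < r.+1, j < N * (n - r.+1 + 1))
     ent y ((j %/ (n - r.+1 + 1)) * n + (i + j %% (n - r.+1 + 1))).

Definition sqnorm (d : nat) (v : 'rV[R]_d) : R := \sum_(i < d) (v 0 i) ^+ 2.
Definition enorm (d : nat) (v : 'rV[R]_d) : R := Num.sqrt (sqnorm v).

Definition Psi (d p q : nat) (A : 'rV[R]_d -> 'M[R]_(p, q))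
  (yhat : 'rV[R]_d) (Rm : 'rV[R]_p) : R :=
  inf [set (2^-1 * sqnorm (y - yhat)) | y in [set y | Rm *m A y = 0]].

Definition attains_Psi (d p q : nat) (A : 'rV[R]_d -> 'M[R]_(p, q))
  (yhat : 'rV[R]_d) (Rm : 'rV[R]_p) (y : 'rV[R]_d) : Prop :=
  Rm *m A y = 0 /\ 2^-1 * sqnorm (y - yhat) = Psi A yhat Rm.

End Defs.

From HB Require Import structures.
From mathcomp Require Import all_boot all_order all_algebra.
From mathcomp Require Import boolp classical_sets reals.
Import Order.TTheory GRing.Theory Num.Theory.
Local Open Scope ring_scope.

(* The data y_b is feasible for the problem defining Psi(R^0), hence
   Psi(R~) <= Psi(R^0) <= ||y_b - yhat||^2 / 2, and y_{R~} attains Psi(R~). *)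

Section Psi.
Variables (R : realType) (d p q : nat) (A : 'rV[R]_d -> 'M[R]_(p, q)).
Variable yhat : 'rV[R]_d.

Lemma sqnorm_ge0 (v : 'rV[R]_d) : 0 <= sqnorm v.
Proof. by apply: sumr_ge0 => i _; exact: sqr_ge0. Qed.

Lemma enorm_le (u v : 'rV[R]_d) : sqnorm u <= sqnorm v -> enorm u <= enorm v.
Proof. by move=> le_uv; rewrite /enorm ler_sqrt ?sqnorm_ge0. Qed.

Lemma Psi_le_feasible (Rm : 'rV[R]_p) (y : 'rV[R]_d) :
  Rm *m A y = 0 -> Psi A yhat Rm <= 2^-1 * sqnorm (y - yhat).
Proof.
move=> feas_y; apply: ge_inf; last by exists y.
exists 0 => _ [z _ <-].
by rewrite mulr_ge0 ?invr_ge0 ?sqnorm_ge0.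
Qed.

Lemma attains_Psi_enorm_le (R0 Rt : 'rV[R]_p) (yb yRt : 'rV[R]_d) :
  R0 *m A yb = 0 -> Psi A yhat Rt <= Psi A yhat R0 ->
  attains_Psi A yhat Rt yRt -> enorm (yRt - yhat) <= enorm (yb - yhat).
Proof.
move=> feas_yb le_Psi [_ Psi_yRt]; apply: enorm_le.
have : 2^-1 * sqnorm (yRt - yhat) <= 2^-1 * sqnorm (yb - yhat).
  by rewrite Psi_yRt (le_trans le_Psi) ?Psi_le_feasible.
by rewrite ler_pM2l ?invr_gt0.
Qed.

End Psi.

Theorem theorem4p4 (R : realType) (n N : nat) (rs : 'I_N -> nat) (r : nat) :
  (1 <= n)%N -> (1 <= N)%N ->
  (forall i : 'I_N, (1 <= rs i)%N /\ (rs i <= r)%N) ->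
  (r <= (n - 1)./2)%N ->
  (* case (a): d = n, m = r_i, p = r_i + 1, A = H_{r_i+1} *)
  (forall (i : 'I_N) (yhat yb : 'rV[R]_n) (R0 Rt : 'rV[R]_(rs i).+1)
          (yRt : 'rV[R]_n),
      (\rank (hankel (rs i).+1 yb) <= rs i)%N ->
      R0 != 0 -> R0 *m hankel (rs i).+1 yb = 0 ->
      Rt != 0 ->
      Psi (@hankel R n (rs i).+1) yhat Rt <= Psi (@hankel R n (rs i).+1) yhat R0 ->
      attains_Psi (@hankel R n (rs i).+1) yhat Rt yRt ->
      enorm (yRt - yhat) <= enorm (yb - yhat))
  /\
  (* case (b): d = N n, m = r, p = r + 1, A = [H_{r+1}(y_1) ... H_{r+1}(y_N)] *)
  (forall (yhat yb : 'rV[R]_(N * n)) (R0 Rt : 'rV[R]_r.+1)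
          (yRt : 'rV[R]_(N * n)),
      (\rank (@blockHankel R N n r yb) <= r)%N ->
      R0 != 0 -> R0 *m @blockHankel R N n r yb = 0 ->
      Rt != 0 ->
      Psi (@blockHankel R N n r) yhat Rt <= Psi (@blockHankel R N n r) yhat R0 ->
      attains_Psi (@blockHankel R N n r) yhat Rt yRt ->
      enorm (yRt - yhat) <= enorm (yb - yhat)).
Proof.
move=> _ _ _ _; split.
- by move=> i yhat yb R0 Rt yRt _ _ feas_yb _; exact: attains_Psi_enorm_le.
- by move=> yhat yb R0 Rt yRt _ _ feas_yb _; exact: attains_Psi_enorm_le.
Qed.
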